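(* Let $(\Omega,\mathcal{F},\mathbb{P})$ be a nonatomic probability space, let $u:\mathbb{R}\to\mathbb{R}\cup\{-\infty\}$ be a utility function bounded from above, let $\alpha\in\mathbb{R}$ be such that $u(x)\ge\alpha$ for some $x\in\mathbb{R}$, and set $\mathcal{A}_u^\infty=\{X\in L^\infty: \mathbb{E}[u(X)]\ge\alpha\}$. Let $S=(S_0,S_T)$ be a traded asset with $S_T\in L^\infty$. (i) Assume $u$ never attains the value $-\infty$ and $u(x)>\alpha$ for some $x\in\mathbb{R}$. Then $\rho_{\mathcal{A}_u^\infty,S}$ is finite-valued (hence continuous) on $L^\infty$ if and only if $\mathbb{P}(S_T=0)=0$. (ii) Assume $u$ attains the value $-\infty$ or $u(x)\le\alpha$ for all $x\in\mathbb{R}$. Then $\rho_{\mathcal{A}_u^\infty,S}$ is finite-valued (hence continuous) on $L^\infty$ if and only if $\mathbb{P}(S_T\ge\varepsilon)=1$ for some $\varepsilon>0$.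
   Context: A utility function is a nonconstant, increasing, concave function $u:\mathbb{R}\to\mathbb{R}\cup\{-\infty\}$ (it is then unbounded from below). A traded asset is $S=(S_0,S_T)$ with $S_0>0$ and $S_T\ge0$ a.s., $S_T\neq0$. For $\mathcal{B}\subset L^\infty$, $\rho_{\mathcal{B},S}(X)=\inf\{m\in\mathbb{R}: X+\frac{m}{S_0}S_T\in\mathcal{B}\}$, $X\in L^\infty$. *)

From HB Require Import structures.
From mathcomp Require Import all_boot all_order all_algebra.
From mathcomp Require Import all_classical all_reals all_analysis.
Set Implicit Arguments. Unset Strict Implicit. Unset Printing Implicit Defensive.
Import Order.TTheory GRing.Theory Num.Theory.
Local Open Scope classical_set_scope.
Local Open Scope ring_scope.

Section Defs.
Context (R : realType) (d : measure_display) (T : measurableType d).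
Variable P : probability T R.

Definition nonatomic : Prop :=
  forall A : set T, measurable A -> (0 < P A)%E ->
    exists B : set T, [/\ measurable B, B `<=` A, (0 < P B)%E & (P B < P A)%E].

Definition Linf (X : T -> R) : Prop :=
  measurable_fun setT X /\ exists M : R, {ae P, forall t, `|X t| <= M}.

Definition utility (u : R -> \bar R) : Prop :=
  [/\ forall x, u x != +oo%E,
      exists x y, u x != u y,
      forall x y, x <= y -> (u x <= u y)%E
    & forall x y (l : R), 0 < l -> l < 1 ->
        (l%:E * u x + (1 - l)%:E * u y <= u (l * x + (1 - l) * y)%R)%E].

Definition acc_set (u : R -> \bar R) (alpha : R) : set (T -> R) :=
  [set X | Linf X /\ (alpha%:E <= \int[P]_t u (X t))%E].

Definition traded_asset (S0 : R) (ST : T -> R) : Prop :=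
  [/\ 0 < S0, measurable_fun setT ST, {ae P, forall t, 0 <= ST t}
    & ~ {ae P, forall t, ST t = 0}].

Definition rho (B : set (T -> R)) (S0 : R) (ST : T -> R) (X : T -> R) : \bar R :=
  ereal_inf [set m%:E | m in [set m : R | B (fun t => X t + m / S0 * ST t)]].

End Defs.

From HB Require Import structures.
From mathcomp Require Import all_boot all_order all_algebra.
From mathcomp Require Import all_classical all_reals all_analysis.
From mathcomp Require Import measurable_realfun ring lra.
Set Implicit Arguments. Unset Strict Implicit. Unset Printing Implicit Defensive.
Import Order.TTheory GRing.Theory Num.Theory.
Local Open Scope classical_set_scope.
Local Open Scope ring_scope.

(* [rho X] is finite iff some position [X + m S_T / S_0] is acceptable and the
   acceptable [m] are bounded below.  Comparing [u] of the position with a step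
   function, [E u >= b + (a - b) P(A)] when the position stays above a level of
   utility [>= a] on [A] and above a level of utility [>= b] everywhere, and
   symmetrically from above.  As [u] is bounded above, a position that is very
   low on a set of positive probability is unacceptable.  In case (i) [u] is
   finite, hence unbounded below: mass of [S_T] at [0] makes [X = y 1_{S_T = 0}]
   unacceptable for every [m], while [S_T > 0] a.s. makes [P(S_T >= eps)] close
   to [1] for small [eps], which yields an acceptable [m] (large) and a lower
   bound (very negative [m] is ruinous on [S_T >= eps]).  In case (ii) one level
   [y] is ruinous at every probability, so unless [S_T] is bounded away from [0]
   the position [X = y - 1] is unacceptable for every [m]. *)

(* If [v a < v b] with [a < b], concavity at [a] between [z < a] and [b] forces
   [v z <= v b - (v b - v a) (b - z) / (b - a)], which tends to [-oo]. *)
Lemma nondecreasing_concave_unbounded_below (R : realType) (v : R -> R) :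
  (forall x y, x <= y -> v x <= v y) -> (exists x y, v x != v y) ->
  (forall x y l, 0 < l -> l < 1 ->
     l * v x + (1 - l) * v y <= v (l * x + (1 - l) * y)) ->
  forall r, exists z, v z <= r.
Proof.
move=> vmono [x1 [y1 hne]] vconc r.
have [a [b [ab vab]]] : exists a b, a < b /\ v a < v b.
  case: (leP x1 y1) => h.
    exists x1, y1; rewrite !lt_neqAle h (vmono _ _ h) !andbT.
    by split; apply: contra hne => /eqP ->.
  by exists y1, x1; split=> //; rewrite lt_neqAle (vmono _ _ (ltW h)) andbT eq_sym.
set h := b - a; set c := v b - v a.
have h0 : 0 < h by rewrite subr_gt0.
have c0 : 0 < c by rewrite subr_gt0.
set D := h * (2 + `|v b - r| / c).
have D2 : 2 * h <= D.
  have : 0 <= `|v b - r| / c by rewrite divr_ge0 // ltW.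
  rewrite /D; nra.
have D0 : 0 < D by lra.
set l := h / D.
have lD : l * D = h by rewrite /l mulfVK // gt_eqF.
have cD : c * D = 2 * c * h + h * `|v b - r| by rewrite /D; field; exact: lt0r_neq0.
have l0 : 0 < l by rewrite /l divr_gt0.
have l1 : l < 1 by rewrite /l ltr_pdivrMr; lra.
exists (b - D); rewrite leNgt; apply/negP => r_lt.
have slope : c <= l * (v b - v (b - D)).
  have := vconc (b - D) b l l0 l1.
  have -> : l * (b - D) + (1 - l) * b = a.
    have -> : l * (b - D) + (1 - l) * b = b - l * D by ring.
    by rewrite lD /h; ring.
  by rewrite /c; lra.
have : c * D < l * `|v b - r| * D.
  rewrite ltr_pM2r //; apply: (le_lt_trans slope); rewrite ltr_pM2l //.
  by have := ler_norm (v b - r); lra.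
by rewrite mulrAC lD cD; nra.
Qed.

Lemma utility_unbounded_below (R : realType) (u : R -> \bar R) :
  utility u -> forall r, exists z, (u z <= r%:E)%E.
Proof.
move=> [uNy nonconst umono uconc] r.
have [[z uz]|noNy] := pselect (exists z, u z = -oo%E).
  by exists z; rewrite uz leNye.
have ufin x : u x \is a fin_num.
  by rewrite fin_numE uNy andbT; apply/eqP => ux; apply: noNy; exists x.
have uE x : u x = (fine (u x))%:E by rewrite fineK.
have [|||z hz] := @nondecreasing_concave_unbounded_below R (fine \o u) _ _ _ r.
- by move=> x y xy; rewrite -lee_fin -!uE umono.
- case: nonconst => x [y xy]; exists x, y; apply: contra xy => /eqP /= fxy.
  by rewrite uE fxy -uE.
- by move=> x y l l0 l1; rewrite -lee_fin /= -uE EFinD !EFinM -!uE uconc.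
by exists z; rewrite uE lee_fin.
Qed.

Lemma nondecreasing_ereal_measurable (R : realType) (u : R -> \bar R) :
  (forall x y, x <= y -> (u x <= u y)%E) -> measurable_fun [set: R] u.
Proof.
move=> umono; apply: (measurability _ (ErealGenCInfty.measurableE R)).
move=> /= _ [_ [r ->] <-]; apply: measurableI => //.
apply: is_interval_measurable => s t /=.
rewrite !in_itv /= !andbT => us ut w /andP[sw wt].
by rewrite in_itv /= andbT (le_trans us) // umono.
Qed.

Section probability_facts.
Context (R : realType) (d : measure_display) (T : measurableType d).
Variable P : probability T R.

Lemma ae_le_integral (f g : T -> \bar R) : measurable_fun setT f ->
  measurable_fun setT g -> {ae P, forall t, (f t <= g t)%E} ->
  (\int[P]_t f t <= \int[P]_t g t)%E.
Proof.
move=> mf mg fg; rewrite integralE [leRHS]integralE leeB //.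
- apply: ae_ge0_le_integral => //; do ?[exact: measurable_funepos | exact: funepos_ge0].
  apply: filterS fg => t fgt _.
  by apply: (@funepos_le _ _ [set t] f g); [move=> s; rewrite inE => -> | rewrite inE].
- apply: ae_ge0_le_integral => //; do ?[exact: measurable_funeneg | exact: funeneg_ge0].
  apply: filterS fg => t fgt _.
  by apply: (@funeneg_le _ _ [set t] f g); [move=> s; rewrite inE => -> | rewrite inE].
Qed.

Let step (A : set T) (a b : R) t : \bar R := (b + (a - b) * \1_A t)%:E.

Let stepE (A : set T) (a b : R) t : step A a b t = (if t \in A then a else b)%:E.
Proof.
by rewrite /step indicE; case: (t \in A); rewrite ?mulr1 ?mulr0 ?addr0 // addrC subrK.
Qed.

Let measurable_step (A : set T) (a b : R) : measurable A ->
  measurable_fun setT (step A a b).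
Proof.
move=> mA; apply/measurable_EFinP; apply: measurable_funD => //.
by apply: measurable_funM => //; exact: measurable_indic.
Qed.

Let integral_step (A : set T) (a b : R) : measurable A ->
  (\int[P]_t step A a b t = (b + (a - b) * fine (P A))%:E)%E.
Proof.
move=> mA; under eq_integral do rewrite /step EFinD EFinM.
rewrite integralD //; last 2 first.
- exact: finite_measure_integrable_cst.
- by apply: integrableZl => //; exact: integrable_indic.
rewrite integral_cst // integralZl //; last exact: integrable_indic.
rewrite integral_indic // setIT [X in (b%:E * X)%E](_ : _ = 1%E) ?mule1; last first.
  exact: probability_setT.
rewrite -[RHS]/(b%:E + (a - b)%:E * (fine (P A))%:E)%E.
by rewrite fineK ?fin_num_measure.
Qed.

Lemma integral_le_step (f : T -> \bar R) (A : set T) (a b : R) :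
  measurable A -> measurable_fun setT f ->
  {ae P, forall t, A t -> (f t <= a%:E)%E} -> {ae P, forall t, (f t <= b%:E)%E} ->
  (\int[P]_t f t <= (b + (a - b) * fine (P A))%:E)%E.
Proof.
move=> mA mf fA fb; rewrite -integral_step //; apply: ae_le_integral => //.
  exact: measurable_step.
by apply: filterS2 fA fb => t ftA ftb; rewrite stepE; case: ifPn => // /set_mem.
Qed.

Lemma integral_ge_step (f : T -> \bar R) (A : set T) (a b : R) :
  measurable A -> measurable_fun setT f ->
  {ae P, forall t, A t -> (a%:E <= f t)%E} -> {ae P, forall t, (b%:E <= f t)%E} ->
  ((b + (a - b) * fine (P A))%:E <= \int[P]_t f t)%E.
Proof.
move=> mA mf fA fb; rewrite -integral_step //; apply: ae_le_integral => //.
  exact: measurable_step.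
by apply: filterS2 fA fb => t ftA ftb; rewrite stepE; case: ifPn => // /set_mem.
Qed.

Lemma measurable_ge (f : T -> R) (c : R) :
  measurable_fun setT f -> measurable [set t | c <= f t].
Proof.
move=> mf; have := mf measurableT _ (measurable_itv `[c, +oo[).
by rewrite setTI; congr measurable; apply/seteqP; split => t /=; rewrite in_itv /= andbT.
Qed.

Lemma measurable_eq (f : T -> R) (c : R) :
  measurable_fun setT f -> measurable [set t | f t = c].
Proof. by move=> mf; have := mf measurableT _ (measurable_set1 c); rewrite setTI. Qed.

Lemma ae_of_measure0 (A : set T) (Q : T -> Prop) : measurable A -> P A = 0%E ->
  (forall t, ~ A t -> Q t) -> {ae P, forall t, Q t}.
Proof.
move=> mA PA0 AQ; exists A; split => // t /= nQt.
by apply: contrapT => nAt; exact: nQt (AQ t nAt).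
Qed.

Lemma ae_gt0_measure_ge (f : T -> R) (q : R) : measurable_fun setT f ->
  {ae P, forall t, 0 < f t} -> q < 1 ->
  exists2 eps : R, 0 < eps & (q%:E < P [set t | (eps <= f t)%R])%E.
Proof.
move=> mf [N [mN PN0 Nf]] q1.
pose B n := [set t | n.+1%:R^-1 <= f t].
have mB n : measurable (B n) := measurable_ge _ mf.
apply: contrapT => noeps.
have Bq n : (P (B n) <= q%:E)%E.
  by rewrite leNgt; apply/negP => PBn; apply: noeps; exists n.+1%:R^-1.
have Bnd : nondecreasing_seq B.
  move=> n k nk; apply/subsetPset => t /=; apply: le_trans.
  by rewrite lef_pV2 ?posrE ?ltr0n // ler_nat ltnS.
have PB := @nondecreasing_cvg_mu _ _ _ P _ mB (bigcupT_measurable _ mB) Bnd.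
have : (P (\bigcup_n B n) <= q%:E)%E.
  by rewrite -(cvg_lim _ PB) //; apply: lime_le; [exact: cvgP PB | exact: nearW].
apply/negP; rewrite -ltNge; apply: (@lt_le_trans _ _ 1%E); first by rewrite lte_fin.
rewrite -[1%E](_ : P (~` N) = _); last by rewrite probability_setC // PN0 sube0.
apply: le_measure; rewrite ?inE; [exact: measurableC | exact: bigcupT_measurable |].
move=> t Nt; have ft : 0 < f t by apply: contrapT => nft; exact: Nt (Nf t nft).
exists (Num.truncn (f t)^-1) => //=; rewrite /B /= -[leRHS]invrK.
by rewrite lef_pV2 ?posrE ?invr_gt0 ?ltr0n // ltW // truncnS_gt.
Qed.

Lemma Linf_add_scale (X Y : T -> R) (c : R) : Linf P X -> Linf P Y ->
  Linf P (fun t => X t + c * Y t).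
Proof.
move=> [mX [K XK]] [mY [K' YK']]; split.
  by apply: measurable_funD => //; apply: measurable_funM.
exists (K + `|c| * K'); apply: filterS2 XK YK' => t Xt Yt.
by rewrite (le_trans (ler_normD _ _)) // lerD // normrM ler_wpM2l.
Qed.

Lemma Linf_cst (c : R) : Linf P (fun=> c).
Proof. by split; [exact: measurable_cst | exists `|c|; exact: aeW]. Qed.

Lemma Linf_scale_indic (A : set T) (c : R) : measurable A -> Linf P (fun t => c * \1_A t).
Proof.
move=> mA; split; first by apply: measurable_funM => //; exact: measurable_indic.
exists `|c|; apply: aeW => t; rewrite normrM indicE.
by case: (t \in A); rewrite ?normr1 ?normr0 ?mulr1 ?mulr0.
Qed.

Lemma Linf_ae_bounded (X : T -> R) : Linf P X ->
  exists2 K, 0 <= K & {ae P, forall t, - K <= X t <= K}.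
Proof.
move=> [_ [K XK]]; exists `|K| => //; apply: filterS XK => t Xt.
by rewrite -ler_norml (le_trans Xt) // ler_norm.
Qed.

End probability_facts.

(* [u <= b] everywhere and [u y <= a] give [E u(Y) <= b + (a - b) P(Y <= y)], so
   ending at or below [y] with probability [p] already breaks [E u(Y) >= alpha]. *)
Definition ruinous (R : realType) (u : R -> \bar R) (alpha b y p : R) : Prop :=
  exists a : R, (u y <= a%:E)%E /\ b + (a - b) * p < alpha.

Lemma ruinous_of_low_utility (R : realType) (u : R -> \bar R) (alpha b y p : R) :
  0 < p -> (u y <= (b + (alpha - b - 1) / p)%:E)%E -> ruinous u alpha b y p.
Proof.
move=> p_gt0 uy; exists (b + (alpha - b - 1) / p); split=> //.
by rewrite addrAC subrr add0r mulfVK ?gt_eqF //; lra.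
Qed.

Lemma ruinous_of_unbounded_below (R : realType) (u : R -> \bar R) (alpha b p : R) :
  (forall r, exists z, (u z <= r%:E)%E) -> 0 < p -> exists y, ruinous u alpha b y p.
Proof.
move=> unb p_gt0; have [y uy] := unb (b + (alpha - b - 1) / p).
by exists y; exact: ruinous_of_low_utility.
Qed.

Lemma exists_ruinous_level (R : realType) (u : R -> \bar R) (alpha b : R) :
  (forall x, (u x <= b%:E)%E) -> (exists x y, u x != u y) ->
  (exists x, u x = -oo%E) \/ (forall x, (u x <= alpha%:E)%E) ->
  exists b' y, (forall x, (u x <= b'%:E)%E) /\
    forall p, 0 < p -> ruinous u alpha b' y p.
Proof.
move=> ub [x1 [y1 u_neq]] [[y uy]|u_le].
  by exists b, y; split=> // p p_gt0; apply: ruinous_of_low_utility; rewrite ?uy ?leNye.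
have [y uy] : exists y, (u y < alpha%:E)%E.
  have [ux1|ux1] := boolP (u x1 < alpha%:E)%E; first by exists x1.
  move: ux1; rewrite -leNgt => ux1.
  exists y1; rewrite lt_neqAle u_le andbT.
  by apply: contra u_neq => /eqP ->; rewrite eq_le u_le.
exists alpha, y; split=> // p p_gt0.
have [uyNy|uyNy] := eqVneq (u y) -oo%E.
  by apply: ruinous_of_low_utility; rewrite ?uyNy ?leNye.
have uy_fin : u y \is a fin_num by rewrite fin_numE uyNy lt_eqF // (lt_trans uy) ?ltry.
exists (fine (u y)); rewrite fineK //; split=> //.
by move: uy; rewrite -[u y]fineK // lte_fin; nra.
Qed.

Section rho.
Context (R : realType) (d : measure_display) (T : measurableType d).
Variables (B : set (T -> R)) (S0 : R) (ST X : T -> R).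

Lemma rho_fin_num : (exists m, B (fun t => X t + m / S0 * ST t)) ->
  (exists m0, forall m, B (fun t => X t + m / S0 * ST t) -> m0 <= m) ->
  rho B S0 ST X \is a fin_num.
Proof.
move=> [m Bm] [m0 m0_lb]; rewrite /rho fin_numElt; apply/andP; split.
  apply: (lt_le_trans (ltNyr m0)); apply/ereal_infP => _ [m' Bm' <-].
  by rewrite lee_fin m0_lb.
apply: (le_lt_trans _ (ltry m)); apply: ge_ereal_inf.
by exists m%:E => //; exists m.
Qed.

Lemma rho_pinfty : (forall m, ~ B (fun t => X t + m / S0 * ST t)) ->
  rho B S0 ST X = +oo%E.
Proof.
move=> noB; apply/eqP; rewrite eq_le leey /=.
by apply/ereal_infP => x [m Bm _]; case: (noB m Bm).
Qed.

End rho.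

Section acceptability.
Context (R : realType) (d : measure_display) (T : measurableType d).
Variables (P : probability T R) (u : R -> \bar R) (alpha S0 : R) (ST : T -> R).
Hypothesis umono : forall x y, x <= y -> (u x <= u y)%E.
Hypothesis S0_gt0 : 0 < S0.
Hypothesis mST : measurable_fun setT ST.
Hypothesis ST_ge0 : {ae P, forall t, 0 <= ST t}.
Hypothesis LST : Linf P ST.

Let acceptable (X : T -> R) (m : R) := acc_set P u alpha (fun t => X t + m / S0 * ST t).

Let measurable_utility (Y : T -> R) :
  measurable_fun setT Y -> measurable_fun setT (fun t => u (Y t)).
Proof. exact: measurableT_comp (nondecreasing_ereal_measurable umono). Qed.

Lemma acceptable_of_ae_ge (X : T -> R) (m : R) (A : set T) (xa xb a b : R) :
  measurable A -> Linf P X -> (a%:E <= u xa)%E -> (b%:E <= u xb)%E ->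
  alpha <= b + (a - b) * fine (P A) ->
  {ae P, forall t, A t -> xa <= X t + m / S0 * ST t} ->
  {ae P, forall t, xb <= X t + m / S0 * ST t} ->
  acceptable X m.
Proof.
move=> mA LX uxa uxb alpha_le YA Yb; have LY := Linf_add_scale (m / S0) LX LST.
have uYA : {ae P, forall t, A t -> (a%:E <= u (X t + m / S0 * ST t))%E}.
  by apply: filterS YA => t Yt At; rewrite (le_trans uxa) // umono // Yt.
have uYb : {ae P, forall t, (b%:E <= u (X t + m / S0 * ST t))%E}.
  by apply: filterS Yb => t Yt; rewrite (le_trans uxb) // umono.
split=> //; apply: le_trans (integral_ge_step mA (measurable_utility LY.1) uYA uYb).
by rewrite lee_fin.
Qed.

Lemma not_acceptable_of_ae_le (X : T -> R) (m : R) (A : set T) (y b : R) :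
  (forall x, (u x <= b%:E)%E) -> measurable A -> ruinous u alpha b y (fine (P A)) ->
  {ae P, forall t, A t -> X t + m / S0 * ST t <= y} ->
  ~ acceptable X m.
Proof.
move=> ub mA [a [uya ruin]] YA [LY acc].
have uYA : {ae P, forall t, A t -> (u (X t + m / S0 * ST t) <= a%:E)%E}.
  by apply: filterS YA => t Yt At; exact: le_trans (umono (Yt At)) uya.
have := le_trans acc (integral_le_step mA (measurable_utility LY.1) uYA (aeW _ (fun=> ub _))).
by rewrite lee_fin; lra.
Qed.

Lemma acceptable_bounded_below (X : T -> R) (b y eps : R) :
  (forall x, (u x <= b%:E)%E) -> Linf P X -> 0 < eps ->
  ruinous u alpha b y (fine (P [set t | eps <= ST t])) ->
  exists m0, forall m, acceptable X m -> m0 <= m.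
Proof.
move=> ub LX eps_gt0 ruin; have [K K_ge0 XK] := Linf_ae_bounded LX.
exists (- (K + `|y|) / eps * S0) => m acc; rewrite leNgt; apply/negP => m_lt.
apply: (not_acceptable_of_ae_le ub (measurable_ge _ mST) ruin _ acc).
have c_lt : m / S0 * eps < - (K + `|y|) by rewrite -ltr_pdivlMr // ltr_pdivrMr.
have c_le0 : m / S0 <= 0.
  by rewrite -(pmulr_lle0 _ eps_gt0); have := normr_ge0 y; lra.
apply: filterS XK => t /andP[_ XtK] epsSt.
have := ler_wnM2l c_le0 epsSt; have := ler_norm (- y); rewrite normrN; lra.
Qed.

Lemma exists_acceptable_of_ae_gt0 (X : T -> R) (x : R) :
  (forall x, u x \is a fin_num) -> (alpha%:E < u x)%E ->
  {ae P, forall t, 0 < ST t} -> Linf P X -> exists m, acceptable X m.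
Proof.
move=> ufin ux ST_gt0 LX; have [K K_ge0 XK] := Linf_ae_bounded LX.
have uE z : u z = (fine (u z))%:E by rewrite fineK.
set a := fine (u `|x|); set b := fine (u (- K)).
have alpha_lt_a : alpha < a by rewrite -lte_fin -uE (lt_le_trans ux) // umono // ler_norm.
have b_le_a : b <= a by rewrite -lee_fin -!uE umono // (le_trans _ (normr_ge0 _)) // oppr_le0.
(* once [P(eps <= ST) > 1 - eta], the step bound [b + (a - b) P(eps <= ST)] exceeds [alpha] *)
set eta := (a - alpha) / (a - b + 1).
have eta_gt0 : 0 < eta by rewrite divr_gt0 //; lra.
have etaE : eta * (a - b + 1) = a - alpha by rewrite divfK // gt_eqF //; lra.
have [eps eps_gt0 P_eps] :
    exists2 eps : R, 0 < eps & ((1 - eta)%:E < P [set t | (eps <= ST t)%R])%E.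
  by apply: ae_gt0_measure_ge => //; lra.
have mE := measurable_ge eps mST.
have p_gt : 1 - eta < fine (P [set t | eps <= ST t]).
  by rewrite -lte_fin fineK ?fin_num_measure.
exists ((`|x| + K) / eps * S0).
have mS0E : (`|x| + K) / eps * S0 / S0 = (`|x| + K) / eps by rewrite mulfK // gt_eqF.
have c_ge0 : 0 <= (`|x| + K) / eps by rewrite divr_ge0 // ?addr_ge0 // ltW.
apply: (acceptable_of_ae_ge (A := [set t | eps <= ST t]) (xa := `|x|) (xb := - K) (a := a) (b := b))
  => //.
- by rewrite /a -uE.
- by rewrite /b -uE.
- have : 0 <= (a - b) * (fine (P [set t | eps <= ST t]) - (1 - eta)).
    by rewrite mulr_ge0 //; lra.
  nra.
- apply: filterS XK => t /andP[XtK _] epsSt; rewrite mS0E.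
  have := ler_wpM2l c_ge0 epsSt; rewrite divfK ?gt_eqF //; lra.
- apply: filterS2 XK ST_ge0 => t /andP[XtK _] STt; rewrite mS0E.
  by have := mulr_ge0 c_ge0 STt; lra.
Qed.

Lemma null_zero_set_of_rho_fin_num (b : R) :
  (forall x, (u x <= b%:E)%E) -> (forall p, 0 < p -> exists y, ruinous u alpha b y p) ->
  (forall X, Linf P X -> rho (acc_set P u alpha) S0 ST X \is a fin_num) ->
  P [set t | ST t = 0] = 0%E.
Proof.
move=> ub ruin rho_fin; have mA : measurable [set t | ST t = 0] := measurable_eq _ mST.
apply/eqP; rewrite eq_le measure_ge0 andbT leNgt; apply/negP => PA_gt0.
have p_gt0 : 0 < fine (P [set t | ST t = 0]) by rewrite -lte_fin fineK ?fin_num_measure.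
have [y ruin_y] := ruin _ p_gt0.
have := rho_fin _ (Linf_scale_indic P y mA); rewrite rho_pinfty // => m.
apply: (not_acceptable_of_ae_le ub mA ruin_y); apply: aeW => t STt.
by rewrite indicE mem_set // STt mulr1 mulr0 addr0.
Qed.

Lemma rho_fin_num_of_null_zero_set (b x : R) :
  (forall x, (u x <= b%:E)%E) -> (forall p, 0 < p -> exists y, ruinous u alpha b y p) ->
  (forall x, u x \is a fin_num) -> (alpha%:E < u x)%E ->
  P [set t | ST t = 0] = 0%E ->
  forall X, Linf P X -> rho (acc_set P u alpha) S0 ST X \is a fin_num.
Proof.
move=> ub ruin ufin ux PA0 X LX.
have ST_gt0 : {ae P, forall t, 0 < ST t}.
  apply: filterS2 ST_ge0 (ae_of_measure0 (measurable_eq 0 mST) PA0 (fun _ h => h)).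
  by move=> t STt STt_neq0; rewrite lt_neqAle STt andbT eq_sym; apply/eqP.
have [eps eps_gt0 P_eps] := ae_gt0_measure_ge mST ST_gt0 ltr01.
have mE := measurable_ge eps mST.
have p_gt0 : 0 < fine (P [set t | eps <= ST t]) by rewrite -lte_fin fineK ?fin_num_measure.
have [y ruin_y] := ruin _ p_gt0.
apply: rho_fin_num; first exact: exists_acceptable_of_ae_gt0 ux ST_gt0 LX.
exact: acceptable_bounded_below ub LX eps_gt0 ruin_y.
Qed.

Lemma bounded_away_of_rho_fin_num (b y : R) :
  (forall x, (u x <= b%:E)%E) -> (forall p, 0 < p -> ruinous u alpha b y p) ->
  (forall X, Linf P X -> rho (acc_set P u alpha) S0 ST X \is a fin_num) ->
  exists eps : R, 0 < eps /\ P [set t | eps <= ST t] = 1%E.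
Proof.
move=> ub ruin rho_fin; apply: contrapT => not_away.
have := rho_fin _ (Linf_cst P (y - 1)); rewrite rho_pinfty // => m.
(* below [eps] the position [y - 1 + m ST / S0] cannot climb above [y] *)
set eps := S0 / (`|m| + 1).
have m1_gt0 : 0 < `|m| + 1 by rewrite ltr_pwDr.
have eps_gt0 : 0 < eps by rewrite divr_gt0.
have mE := measurable_ge eps mST; have mCE := measurableC mE.
have p_gt0 : 0 < fine (P (~` [set t | eps <= ST t])).
  rewrite -lte_fin fineK ?fin_num_measure //.
  rewrite [X in (_ < X)%E](_ : _ = 1 - P [set t | (eps <= ST t)%R])%E; last first.
    exact: probability_setC.
  rewrite sube_gt0 ?fin_num_measure // lt_neqAle probability_le1 // andbT.
  apply/eqP => PE1.
  by apply: not_away; exists eps.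
apply: (not_acceptable_of_ae_le ub mCE (ruin _ p_gt0)).
apply: filterS ST_ge0 => t STt /negP; rewrite -ltNge => STt_lt.
have : m / S0 * ST t <= `|m| / S0 * ST t.
  by apply: ler_wpM2r => //; apply: ler_wpM2r; [rewrite invr_ge0 ltW | exact: ler_norm].
have : `|m| / S0 * ST t <= `|m| / S0 * eps.
  by apply: ler_wpM2l; [rewrite divr_ge0 // ltW | exact: ltW].
have -> : `|m| / S0 * eps = `|m| / (`|m| + 1).
  by rewrite /eps; field; rewrite !gt_eqF.
have : `|m| / (`|m| + 1) < 1 by rewrite ltr_pdivrMr //; lra.
lra.
Qed.

Lemma rho_fin_num_of_bounded_away (b y x : R) :
  (forall x, (u x <= b%:E)%E) -> ruinous u alpha b y 1 -> (alpha%:E <= u x)%E ->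
  (exists eps : R, 0 < eps /\ P [set t | eps <= ST t] = 1%E) ->
  forall X, Linf P X -> rho (acc_set P u alpha) S0 ST X \is a fin_num.
Proof.
move=> ub ruin ux [eps [eps_gt0 PE1]] X LX.
have mE := measurable_ge eps mST.
have ST_ge_eps : {ae P, forall t, eps <= ST t}.
  apply: (ae_of_measure0 (measurableC mE)); last by move=> t; exact: contrapT.
  by rewrite probability_setC // PE1 subee.
have ruin_eps : ruinous u alpha b y (fine (P [set t | eps <= ST t])) by rewrite PE1.
apply: rho_fin_num; last exact: acceptable_bounded_below ub LX eps_gt0 ruin_eps.
have [K K_ge0 XK] := Linf_ae_bounded LX.
exists ((K + `|x|) / eps * S0).
have mS0E : (K + `|x|) / eps * S0 / S0 = (K + `|x|) / eps by rewrite mulfK // gt_eqF.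
have c_ge0 : 0 <= (K + `|x|) / eps by rewrite divr_ge0 // ?addr_ge0 // ltW.
have Yx : {ae P, forall t, x <= X t + (K + `|x|) / eps * S0 / S0 * ST t}.
  apply: filterS2 XK ST_ge_eps => t /andP[XtK _] epsSt; rewrite mS0E.
  have := ler_wpM2l c_ge0 epsSt; rewrite divfK ?gt_eqF // => c_ge.
  by have := ler_norm x; lra.
apply: (acceptable_of_ae_ge (A := setT) (a := alpha) (b := alpha) (xa := x) (xb := x)) => //.
- by rewrite subrr mul0r addr0.
- by apply: filterS Yx.
Qed.

End acceptability.

Theorem proposition6p1 (R : realType) (d : measure_display) (T : measurableType d)
  (P : probability T R) (u : R -> \bar R) (alpha : R) (S0 : R) (ST : T -> R) :
  nonatomic P -> utility u ->
  (exists M : R, forall x, (u x <= M%:E)%E) ->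
  (exists x, (alpha%:E <= u x)%E) ->
  traded_asset P S0 ST -> Linf P ST ->
  ((forall x, u x != -oo%E) -> (exists x, (alpha%:E < u x)%E) ->
     ((forall X, Linf P X -> rho (acc_set P u alpha) S0 ST X \is a fin_num)
      <-> P [set t | ST t = 0] = 0%E))
  /\
  (((exists x, u x = -oo%E) \/ (forall x, (u x <= alpha%:E)%E)) ->
     ((forall X, Linf P X -> rho (acc_set P u alpha) S0 ST X \is a fin_num)
      <-> exists eps : R, 0 < eps /\ P [set t | eps <= ST t] = 1%E)).
Proof.
move=> _ hu [M uM] [x0 ux0] [S0_gt0 mST ST_ge0 _] LST.
have [uNpy nonconst umono _] := hu.
split=> [uNy [x2 ux2] | low].
- have ufin x : u x \is a fin_num by rewrite fin_numE uNy uNpy.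
  have ruin p : 0 < p -> exists y, ruinous u alpha M y p.
    exact: ruinous_of_unbounded_below (utility_unbounded_below hu).
  split; first exact: null_zero_set_of_rho_fin_num uM ruin.
  exact: rho_fin_num_of_null_zero_set uM ruin ufin ux2.
- have [b [y [ub ruin]]] := exists_ruinous_level uM nonconst low.
  split; first exact: bounded_away_of_rho_fin_num ub ruin.
  exact: rho_fin_num_of_bounded_away ub (ruin 1 ltr01) ux0.
Qed.
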